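(* Let $X$ be a normed space and $Y$ a Banach space. Let $p$ and $\theta$ be nonnegative integer numbers with $p\neq1,3$. Suppose that an odd mapping $f:X\to Y$ satisfies $$\|D_f(x,y)\|\le\theta\left(\|x\|^p+\|y\|^p\right)$$ for all $x,y\in X$. Then there exist a unique additive function $A:X\to Y$ and a unique cubic function $C:X\to Y$ satisfying $$\|f(x)-A(x)-C(x)\|\le\frac{\theta}{6}\left[\frac{1}{|2^p-2|}+\frac{1}{|2^p-8|}\right]\|x\|^p$$ for all $x\in X$.
   Context: For a mapping $f:X\to Y$ define $$D_f(x,y)=3f(x+3y)-f(3x+y)-12[f(x+y)+f(x-y)]+16[f(x)+f(y)]-12f(2y)+4f(2x)$$ for $x,y\in X$. A function $g:X\to Y$ is additive if $g(x+y)=g(x)+g(y)$ for all $x,y\in X$, and cubic if $g(x+2y)-3g(x+y)+3g(x)-g(x-y)=6g(y)$ for all $x,y\in X$. *)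

From HB Require Import structures.
From mathcomp Require Import all_boot all_order all_algebra.
From mathcomp Require Import all_classical all_reals all_analysis.
Set Implicit Arguments. Unset Strict Implicit. Unset Printing Implicit Defensive.
Import Order.TTheory GRing.Theory Num.Theory.
Local Open Scope ring_scope.

Definition Dmix (X Y : zmodType) (f : X -> Y) (x y : X) : Y :=
  f (x + y *+ 3) *+ 3 - f (x *+ 3 + y)
  - (f (x + y) + f (x - y)) *+ 12 + (f x + f y) *+ 16
  - f (y *+ 2) *+ 12 + f (x *+ 2) *+ 4.

Definition additive_map (X Y : zmodType) (g : X -> Y) : Prop :=
  forall x y, g (x + y) = g x + g y.

Definition cubic_map (X Y : zmodType) (g : X -> Y) : Prop :=
  forall x y, g (x + y *+ 2) - g (x + y) *+ 3 + g x *+ 3 - g (x - y) = g y *+ 6.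

Definition odd_map (X Y : zmodType) (g : X -> Y) : Prop :=
  forall x, g (- x) = - g x.

From HB Require Import structures.
From mathcomp Require Import all_boot all_order all_algebra.
From mathcomp Require Import all_classical all_reals all_analysis.
From mathcomp Require Import ring.
Set Implicit Arguments. Unset Strict Implicit. Unset Printing Implicit Defensive.
Import Order.TTheory GRing.Theory Num.Theory.
Import numFieldNormedType.Exports.
Local Open Scope classical_set_scope.
Local Open Scope ring_scope.

(* Since f is odd, D_f(x, x) = 2 (f(4x) - 10 f(2x) + 16 f(x)), and the bracket is
   g(2x) - 8 g(x) for g := f(2.) - 2 f, and h(2x) - 2 h(x) for h := f(2.) - 8 f.
   Hyers' direct method, iterating x |-> 2x or x |-> x/2 according as 2^p is smaller or
   larger than the factor k (k = 8 for g, k = 2 for h; 2^p <> k since p <> 1, 3), yields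
   odd maps G, H close to g, h with G(2x) = 8 G(x), H(2x) = 2 H(x) and D_G = D_H = 0;
   such solutions are cubic, resp. additive.  As g - h = 6 f, take C = G/6, A = -H/6.
   Uniqueness: if a is additive, c cubic and a + c = O(|x|^p), then
   6 a(x) = 8 (a + c)(x) - (a + c)(2x) and 6 c(x) = (a + c)(2x) - 2 (a + c)(x) are
   O(|x|^p) and multiplied by 2, resp. 8, under doubling, so they vanish. *)

(* The trivial extension Z |x V, a commutative ring in which V is a square-zero ideal:
   embedding a Z-module into it lets [ring] decide its linear identities. *)
Section TrivialExtension.
Variable V : zmodType.

Definition zext : Type := (int * V)%type.
HB.instance Definition _ := GRing.Zmodule.on zext.

Definition zext_mul (a b : zext) : zext := (a.1 * b.1, a.2 *~ b.1 + b.2 *~ a.1).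

Lemma zext_mulA : associative zext_mul.
Proof.
move=> [a u] [b v] [c w]; rewrite /zext_mul /=; congr pair; first by rewrite mulrA.
by rewrite !mulrzDl -!mulrzA addrA (mulrC c a) (mulrC b a).
Qed.

Lemma zext_mulC : commutative zext_mul.
Proof. by move=> [a u] [b v]; rewrite /zext_mul /= mulrC addrC. Qed.

Lemma zext_mul1 : left_id ((1, 0) : zext) zext_mul.
Proof. by move=> [a u]; rewrite /zext_mul /= mul1r mulr1z mul0rz add0r. Qed.

Lemma zext_mulDl : left_distributive zext_mul +%R.
Proof.
move=> [a u] [b v] [c w]; rewrite /zext_mul /=; congr pair; first by rewrite mulrDl.
by rewrite mulrzDl mulrzDr addrACA.
Qed.

Lemma zext_one_neq0 : ((1, 0) : zext) != 0.
Proof. by apply/eqP => -[]. Qed.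

HB.instance Definition _ := GRing.Zmodule_isComNzRing.Build zext
  zext_mulA zext_mulC zext_mul1 zext_mulDl zext_one_neq0.

Definition zext_inj (v : V) : zext := (0, v).

Lemma zext_injI : injective zext_inj.
Proof. by move=> u v []. Qed.

Lemma zext_injD u v : zext_inj (u + v) = zext_inj u + zext_inj v. Proof. by []. Qed.
Lemma zext_injN u : zext_inj (- u) = - zext_inj u. Proof. by []. Qed.
Lemma zext_injB u v : zext_inj (u - v) = zext_inj u - zext_inj v. Proof. by []. Qed.
Lemma zext_inj0 : zext_inj 0 = 0. Proof. by []. Qed.

Lemma zext_injMn u n : zext_inj (u *+ n) = zext_inj u *+ n.
Proof. by elim: n => [|n IH] //; rewrite !mulrS zext_injD IH. Qed.

Lemma zext_injMz u z : zext_inj (u *~ z) = zext_inj u *~ z.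
Proof. by case: z => n; rewrite ?NegzE ?mulrNz /= ?zext_injN -!pmulrn zext_injMn. Qed.

End TrivialExtension.

Ltac zmod_ring :=
  apply: zext_injI; rewrite ?(zext_injD, zext_injB, zext_injN, zext_injMn, zext_injMz, zext_inj0); ring.

Section DmixAlgebra.
Variables X Y : zmodType.
Implicit Types (F G : X -> Y) (x y u v : X).

Lemma DmixD F G x y : Dmix (fun z => F z + G z) x y = Dmix F x y + Dmix G x y.
Proof. rewrite /Dmix /=; zmod_ring. Qed.

Lemma DmixBMn F G k x y :
  Dmix (fun z => F z - G z *+ k) x y = Dmix F x y - Dmix G x y *+ k.
Proof. rewrite /Dmix /=; zmod_ring. Qed.

Lemma DmixE F u v a1 a2 a3 a4 a5 a6 :
  u + v *+ 3 = a1 -> u *+ 3 + v = a2 -> u + v = a3 -> u - v = a4 ->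
  v *+ 2 = a5 -> u *+ 2 = a6 ->
  Dmix F u v = F a1 *+ 3 - F a2 - (F a3 + F a4) *+ 12 + (F u + F v) *+ 16
               - F a5 *+ 12 + F a6 *+ 4.
Proof. by move=> <- <- <- <- <- <-. Qed.

Lemma Dmix_double F x y :
  Dmix (fun z => F (z *+ 2)) x y = Dmix F (x *+ 2) (y *+ 2).
Proof.
by rewrite (DmixE F (a1 := (x + y *+ 3) *+ 2) (a2 := (x *+ 3 + y) *+ 2)
  (a3 := (x + y) *+ 2) (a4 := (x - y) *+ 2) (a5 := y *+ 2 *+ 2) (a6 := x *+ 2 *+ 2)) //;
  zmod_ring.
Qed.

Lemma Dmix_diag F x : F 0 = 0 ->
  Dmix F x x = (F (x *+ 4) - F (x *+ 2) *+ 10 + F x *+ 16) *+ 2.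
Proof.
move=> F0; rewrite (DmixE F (a1 := x *+ 4) (a2 := x *+ 4) (a3 := x *+ 2) (a4 := 0)
  (a5 := x *+ 2) (a6 := x *+ 2)) ?F0; zmod_ring.
Qed.

End DmixAlgebra.

Lemma DmixZ (R : pzRingType) (X Y : lmodType R) (w : X -> Y) (a b : R) x y :
  Dmix (fun z => a *: w (b *: z)) x y = a *: Dmix w (b *: x) (b *: y).
Proof. by rewrite /Dmix /= !(scalerMnr, scalerDr, scalerBr, scalerN); zmod_ring. Qed.

Definition torsion_free (V : zmodType) :=
  forall n (u v : V), (0 < n)%N -> u *+ n = v *+ n -> u = v.

Lemma lmod_torsion_free (R : numFieldType) (V : lmodType R) : torsion_free V.
Proof.
move=> n u v n_gt0 uv; have nz : (n%:R : R) != 0 by rewrite pnatr_eq0 -lt0n.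
by rewrite -[u]scale1r -[v]scale1r -(mulVf nz) -!scalerA !scaler_nat uv.
Qed.

Definition doubling (X Y : zmodType) (k : nat) (v : X -> Y) :=
  forall x, v (x *+ 2) = v x *+ k.

Lemma eq0_subMz (V : zmodType) (a e : V) (c : int) : 0 = e -> a - e *~ c = 0 -> a = 0.
Proof. by move=> <-; rewrite mul0rz subr0. Qed.

Section OddSolutions.
Variables (X Y : zmodType) (F : X -> Y).
Hypotheses (tfY : torsion_free Y) (F_odd : odd_map F).
Hypothesis DF0 : forall x y, Dmix F x y = 0.

Lemma odd_map0 : F 0 = 0.
Proof.
have F0 := F_odd 0; rewrite oppr0 in F0.
by apply: (tfY (n := 2)) => //; rewrite mul0rn mulr2n {2}F0 subrr.
Qed.

Lemma Dmix0E u v a1 a2 a3 a4 a5 a6 :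
  u + v *+ 3 = a1 -> u *+ 3 + v = a2 -> u + v = a3 -> u - v = a4 ->
  v *+ 2 = a5 -> u *+ 2 = a6 ->
  0 = F a1 *+ 3 - F a2 - (F a3 + F a4) *+ 12 + (F u + F v) *+ 16 - F a5 *+ 12 + F a6 *+ 4.
Proof. by move=> e1 e2 e3 e4 e5 e6; rewrite -(DF0 u v) (DmixE F e1 e2 e3 e4 e5 e6). Qed.

(* [a1 .. a6] are normal forms of u + 3v, 3u + v, u + v, u - v, 2v, 2u chosen so that
   oddness and the doubling rule can be rewritten in the resulting instance. *)
Tactic Notation "Dmix0_at" ident(H) uconstr(u) uconstr(v)
    uconstr(a1) uconstr(a2) uconstr(a3) uconstr(a4) uconstr(a5) uconstr(a6) :=
  have H := @Dmix0E u v a1 a2 a3 a4 a5 a6 ltac:(zmod_ring) ltac:(zmod_ring)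
    ltac:(zmod_ring) ltac:(zmod_ring) ltac:(zmod_ring) ltac:(zmod_ring);
  rewrite ?F_odd ?odd_map0 in H.

Lemma cubic_of_Dmix0 : doubling 8 F -> cubic_map F.
Proof.
move=> F2 x y.
Dmix0_at H0 (- (x + y)) (x - y) ((x - y *+ 2) *+ 2) (- ((x + y *+ 2) *+ 2))
  (- (y *+ 2)) (- (x *+ 2)) ((x - y) *+ 2) (- ((x + y) *+ 2)).
Dmix0_at H1 (- (x - y)) (x + y) ((x + y *+ 2) *+ 2) (- ((x - y *+ 2) *+ 2))
  (y *+ 2) (- (x *+ 2)) ((x + y) *+ 2) (- ((x - y) *+ 2)).
rewrite !F2 in H0 H1.
apply: (tfY (n := 64)) => //; apply/eqP; rewrite -subr_eq0; apply/eqP.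
apply: (eq0_subMz (c := -1) H0); apply: (eq0_subMz (c := 3) H1).
by zmod_ring.
Qed.

Lemma additive_of_Dmix0 : doubling 2 F -> additive_map F.
Proof.
move=> F2 x y.
Dmix0_at H0 (- (x - y)) (- (x + y)) (- ((x *+ 2 + y) *+ 2)) (- ((x *+ 2 - y) *+ 2))
  (- (x *+ 2)) (y *+ 2) (- ((x + y) *+ 2)) (- ((x - y) *+ 2)).
Dmix0_at H1 (- (x + y)) (- (x - y)) (- ((x *+ 2 - y) *+ 2)) (- ((x *+ 2 + y) *+ 2))
  (- (x *+ 2)) (- (y *+ 2)) (- ((x - y) *+ 2)) (- ((x + y) *+ 2)).
Dmix0_at H2 (- (x + y)) x (x *+ 2 - y) (- (x *+ 2 + y *+ 3))
  (- y) (- (x *+ 2 + y)) (x *+ 2) (- ((x + y) *+ 2)).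
Dmix0_at H3 (- x) (x + y) (x *+ 2 + y *+ 3) (- (x *+ 2 - y))
  y (- (x *+ 2 + y)) ((x + y) *+ 2) (- (x *+ 2)).
Dmix0_at H4 (- (x + y)) (x - y) ((x - y *+ 2) *+ 2) (- ((x + y *+ 2) *+ 2))
  (- (y *+ 2)) (- (x *+ 2)) ((x - y) *+ 2) (- ((x + y) *+ 2)).
Dmix0_at H5 (- y) (- (x - y)) (- (x *+ 3 - y *+ 2)) (- (x + y *+ 2))
  (- x) (x - y *+ 2) (- ((x - y) *+ 2)) (- (y *+ 2)).
Dmix0_at H6 (- (x - y)) (- y) (- (x + y *+ 2)) (- (x *+ 3 - y *+ 2))
  (- x) (- (x - y *+ 2)) (- (y *+ 2)) (- ((x - y) *+ 2)).
Dmix0_at H7 (- (x - y)) (x + y) ((x + y *+ 2) *+ 2) (- ((x - y *+ 2) *+ 2))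
  (y *+ 2) (- (x *+ 2)) ((x + y) *+ 2) (- ((x - y) *+ 2)).
rewrite ?F2 in H0 H1 H2 H3 H4 H5 H6 H7.
apply: (tfY (n := 192)) => //; apply/eqP; rewrite -subr_eq0; apply/eqP.
apply: (eq0_subMz (c := -5) H0); apply: (eq0_subMz (c := -3) H1).
apply: (eq0_subMz (c := -3) H2); apply: (eq0_subMz (c := 1) H3).
apply: (eq0_subMz (c := -5) H4); apply: (eq0_subMz (c := 1) H5).
apply: (eq0_subMz (c := 3) H6); apply: (eq0_subMz (c := 3) H7).
by zmod_ring.
Qed.

End OddSolutions.

Section CubicMaps.
Variables (X Y : zmodType) (G : X -> Y).
Hypothesis cubicG : cubic_map G.

Lemma cubicE x y a1 a2 a3 : x + y *+ 2 = a1 -> x + y = a2 -> x - y = a3 ->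
  0 = G a1 - G a2 *+ 3 + G x *+ 3 - G a3 - G y *+ 6.
Proof. by move=> <- <- <-; rewrite cubicG subrr. Qed.

Tactic Notation "cubic_at" ident(H) uconstr(x) uconstr(y) uconstr(a1) uconstr(a2) uconstr(a3) :=
  have H := @cubicE x y a1 a2 a3 ltac:(zmod_ring) ltac:(zmod_ring) ltac:(zmod_ring).

Hypothesis tfY : torsion_free Y.

Lemma cubic_map0 : G 0 = 0.
Proof.
cubic_at H 0 0 0 0 0.
apply: (tfY (n := 6)) => //; apply/eqP; rewrite -subr_eq0; apply/eqP.
by apply: (eq0_subMz (c := -1) H); zmod_ring.
Qed.

Lemma cubic_map_odd : odd_map G.
Proof.
move=> y.
cubic_at H1 (- y) y y 0 (- (y *+ 2)); cubic_at H2 0 (- y) (- (y *+ 2)) (- y) y.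
rewrite cubic_map0 in H1 H2.
apply: (tfY (n := 6)) => //; apply/eqP; rewrite -subr_eq0; apply/eqP.
apply: (eq0_subMz (c := -1) H1); apply: (eq0_subMz (c := -1) H2).
by zmod_ring.
Qed.

Lemma cubic_map_double : doubling 8 G.
Proof.
move=> x; cubic_at H 0 x (x *+ 2) x (- x); rewrite cubic_map0 cubic_map_odd in H.
apply/eqP; rewrite -subr_eq0; apply/eqP; apply: (eq0_subMz (c := 1) H).
by zmod_ring.
Qed.

End CubicMaps.

Section Closure.
Variables X Y : zmodType.
Implicit Types F G : X -> Y.

Lemma additive_mapB F G :
  additive_map F -> additive_map G -> additive_map (fun z => F z - G z).
Proof. by move=> hF hG x y; rewrite hF hG; zmod_ring. Qed.

Lemma cubic_mapB F G : cubic_map F -> cubic_map G -> cubic_map (fun z => F z - G z).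
Proof. by move=> hF hG x y /=; rewrite !mulrnBl -(hF x y) -(hG x y); zmod_ring. Qed.

Lemma cubic_mapZ (R : pzRingType) (V : lmodType R) (F : X -> V) (a : R) :
  cubic_map F -> cubic_map (fun z => a *: F z).
Proof. by move=> hF x y /=; rewrite !scalerMnr -!scalerBr -scalerDr -scalerBr (hF x y). Qed.

End Closure.

Lemma Dmix_norm_le (R : numDomainType) (X : zmodType) (Y : normedZmodType R)
    (w : X -> Y) (g : X -> R) x y :
  (forall z, `|w z| <= g z) ->
  `|Dmix w x y| <= g (x + y *+ 3) *+ 3 + g (x *+ 3 + y) + (g (x + y) + g (x - y)) *+ 12
    + (g x + g y) *+ 16 + g (y *+ 2) *+ 12 + g (x *+ 2) *+ 4.
Proof.
move=> wg; rewrite /Dmix.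
have wgMn a n : `|w a *+ n| <= g a *+ n by rewrite normrMn lerMn2r wg orbT.
have wgDMn a b n : `|(w a + w b) *+ n| <= (g a + g b) *+ n.
  by rewrite normrMn lerMn2r (le_trans (ler_normD _ _)) ?lerD ?orbT.
apply: le_trans (ler_normD _ _) (lerD _ (wgMn _ _)).
apply: le_trans (ler_normB _ _) (lerD _ (wgMn _ _)).
apply: le_trans (ler_normD _ _) (lerD _ (wgDMn _ _ _)).
apply: le_trans (ler_normB _ _) (lerD _ (wgDMn _ _ _)).
exact: le_trans (ler_normB _ _) (lerD (wgMn _ _) (wg _)).
Qed.

Section GeometricBounds.
Variable R : realType.
Implicit Types K q : R.

Lemma le0_geometric (v K q : R) : 0 <= q -> q < 1 -> (forall n, v <= K * q ^+ n) -> v <= 0.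
Proof.
move=> q0 q1 vK; have := @cvg_geometric R K q; rewrite ger0_norm // => /(_ q1) Kq.
by apply: (cvgr_to_ge Kq); apply: nearW.
Qed.

Lemma eq0_geometric (Y : normedModType R) (v : Y) K q : 0 <= q -> q < 1 ->
  (forall n, `|v| <= K * q ^+ n) -> v = 0.
Proof. by move=> q0 q1 vK; apply/eqP; rewrite -normr_le0; exact: le0_geometric q0 q1 vK. Qed.

Variables (Y : completeNormedModType R) (s : nat -> Y) (B q : R).
Hypotheses (q0 : 0 <= q) (q1 : q < 1) (B0 : 0 <= B).
Hypothesis s_step : forall n, `|s n.+1 - s n| <= B * q ^+ n.

Lemma geometric_step_dist n k : `|s (n + k)%N - s n| <= B * q ^+ n * (1 - q ^+ k) / (1 - q).
Proof.
elim: k => [|k IH]; first by rewrite addn0 subrr normr0 expr0 subrr !mulr0 mul0r.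
rewrite addnS; apply: le_trans (ler_distD (s (n + k)%N) _ _) _.
rewrite addrC; apply: le_trans (lerD IH (s_step _)) _; rewrite exprD exprS.
rewrite le_eqVlt; apply/orP; left; apply/eqP.
by field; rewrite subr_eq0 eq_sym lt_eqF.
Qed.

Lemma geometric_step_cvg : cvgn s.
Proof.
pose d n := s n.+1 - s n.
have -> : s = (fun n => s 0%N + series d n).
  by apply: funext => n; rewrite /series /= telescope_sumr // addrC subrK.
apply: is_cvgD; first exact: is_cvg_cst.
apply: normed_cvg; apply: (@series_le_cvg _ _ (geometric B q)) => //.
- by move=> n; rewrite normr_ge0.
- by move=> n; rewrite /geometric /= mulr_ge0 // exprn_ge0.
- by apply: is_cvg_geometric_series; rewrite ger0_norm.
Qed.

Lemma geometric_step_lim n : `|limn s - s n| <= B * q ^+ n / (1 - q).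
Proof.
have lim_dist : `|s m - s n| @[m --> \oo] --> `|limn s - s n|.
  by apply: cvg_norm; apply: cvgB; [exact: geometric_step_cvg | exact: cvg_cst].
apply: (cvgr_to_le lim_dist); exists n => // m /= nm.
rewrite -(subnKC nm) (le_trans (geometric_step_dist n (m - n))) //.
have q1' : 0 < 1 - q by rewrite subr_gt0.
rewrite ler_pM2r ?invr_gt0 // ler_piMr ?mulr_ge0 ?exprn_ge0 //.
by rewrite lerBlDr lerDl exprn_ge0.
Qed.

End GeometricBounds.

Lemma gauge_exprZ (R : numDomainType) (X : lmodType R) (N : X -> R) (c rho : R) :
  (forall x, N (c *: x) = rho * N x) -> forall n x, N (c ^+ n *: x) = rho ^+ n * N x.
Proof.
move=> N_dil; elim=> [|n IH] x; first by rewrite !expr0 scale1r mul1r.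
by rewrite exprS -scalerA N_dil IH mulrA -exprS.
Qed.

Section DilationFixed.
Variables (R : realType) (X Y : normedModType R).
Variables (c l rho : R) (N : X -> R).
Hypotheses (N_dil : forall x, N (c *: x) = rho * N x) (rho_ge0 : 0 <= rho).
Hypothesis lrho_lt1 : `|l| * rho < 1.

Let q := `|l| * rho.
Let q_ge0 : 0 <= q. Proof. by rewrite mulr_ge0. Qed.

Lemma dilation_fixed_eq0 (G : X -> Y) (K : R) :
  (forall x, l *: G (c *: x) = G x) -> (forall x, `|G x| <= K * N x) -> forall x, G x = 0.
Proof.
move=> G_fix G_le x; apply: (@eq0_geometric _ _ _ (K * N x) q) => // n.
have -> : G x = l ^+ n *: G (c ^+ n *: x).
  elim: n {G_le} => [|n IH]; first by rewrite !expr0 !scale1r.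
  by rewrite IH -[G (c ^+ n *: x)]G_fix !scalerA [l ^+ _.+1]exprSr [c ^+ _.+1]exprS.
rewrite normrZ normrX (le_trans (ler_wpM2l _ (G_le _))) ?exprn_ge0 //.
by rewrite (gauge_exprZ N_dil) /q exprMn le_eqVlt; apply/orP; left; apply/eqP; ring.
Qed.

End DilationFixed.

Section Hyers.
Variables (R : realType) (X : normedModType R) (Y : completeNormedModType R).
Variables (c l rho : R) (N : X -> R).
Hypotheses (N_dil : forall x, N (c *: x) = rho * N x) (N_ge0 : forall x, 0 <= N x).
Hypotheses (rho_ge0 : 0 <= rho) (lrho_lt1 : `|l| * rho < 1).
Variables (u : X -> Y) (e : R).
Hypotheses (e_ge0 : 0 <= e) (u_approx : forall x, `|l *: u (c *: x) - u x| <= e * N x).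

Let q := `|l| * rho.
Let q_ge0 : 0 <= q. Proof. by rewrite mulr_ge0. Qed.

Definition hyers_seq n x := l ^+ n *: u (c ^+ n *: x).

Definition hyers_lim x := limn (hyers_seq ^~ x).

Lemma hyers_seq_step x n : `|hyers_seq n.+1 x - hyers_seq n x| <= e * N x * q ^+ n.
Proof.
have -> : hyers_seq n.+1 x - hyers_seq n x
    = l ^+ n *: (l *: u (c *: (c ^+ n *: x)) - u (c ^+ n *: x)).
  by rewrite /hyers_seq scalerBr [l ^+ n *: (l *: _)]scalerA -exprSr [c *: (c ^+ n *: x)]scalerA -exprS.
rewrite normrZ normrX (le_trans (ler_wpM2l _ (u_approx _))) ?exprn_ge0 //.
by rewrite (gauge_exprZ N_dil) /q exprMn le_eqVlt; apply/orP; left; apply/eqP; ring.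
Qed.

Lemma hyers_lim_tail x n : `|hyers_lim x - hyers_seq n x| <= e * N x * q ^+ n / (1 - q).
Proof. by apply: geometric_step_lim => //; [rewrite mulr_ge0 | exact: hyers_seq_step]. Qed.

Lemma hyers_lim_approx x : `|hyers_lim x - u x| <= e / (1 - q) * N x.
Proof. by have := hyers_lim_tail x 0; rewrite /hyers_seq !expr0 !scale1r mulr1 mulrAC. Qed.

Lemma hyers_lim_dilation x : l *: hyers_lim (c *: x) = hyers_lim x.
Proof.
apply/eqP; rewrite -subr_eq0; apply/eqP.
pose K := `|l| * (e * N (c *: x) / (1 - q)) + e * N x * q / (1 - q).
apply: (@eq0_geometric _ _ _ K q) => // n.
have -> : l *: hyers_lim (c *: x) - hyers_lim x =
    l *: (hyers_lim (c *: x) - hyers_seq n (c *: x)) - (hyers_lim x - hyers_seq n.+1 x).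
  rewrite scalerBr; have -> : l *: hyers_seq n (c *: x) = hyers_seq n.+1 x.
    by rewrite /hyers_seq scalerA -exprS scalerA -exprSr.
  by rewrite opprB addrA subrK.
rewrite (le_trans (ler_normB _ _)) // normrZ.
apply: le_trans (lerD (ler_wpM2l (normr_ge0 _) (hyers_lim_tail _ n))
                      (hyers_lim_tail x n.+1)) _.
by rewrite /K exprS le_eqVlt; apply/orP; left; apply/eqP; ring.
Qed.

Lemma hyers_lim_odd : odd_map u -> odd_map hyers_lim.
Proof.
move=> u_odd x; apply/eqP; rewrite -subr_eq0 opprK; apply/eqP.
pose K := e * N (- x) / (1 - q) + e * N x / (1 - q).
apply: (@eq0_geometric _ _ _ K q) => // n.
have -> : hyers_lim (- x) + hyers_lim x =
    (hyers_lim (- x) - hyers_seq n (- x)) + (hyers_lim x - hyers_seq n x).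
  have -> : hyers_seq n (- x) = - hyers_seq n x by rewrite /hyers_seq scalerN u_odd scalerN.
  by rewrite opprK addrACA subrr addr0.
apply: le_trans (ler_normD _ _) (le_trans (lerD (hyers_lim_tail _ n) (hyers_lim_tail x n)) _).
by rewrite /K le_eqVlt; apply/orP; left; apply/eqP; ring.
Qed.

Lemma hyers_lim_Dmix0 (M : R) : (forall x y, `|Dmix u x y| <= M * (N x + N y)) ->
  forall x y, Dmix hyers_lim x y = 0.
Proof.
move=> u_Dmix x y.
pose g z := e / (1 - q) * N z.
pose K := g (x + y *+ 3) *+ 3 + g (x *+ 3 + y) + (g (x + y) + g (x - y)) *+ 12
    + (g x + g y) *+ 16 + g (y *+ 2) *+ 12 + g (x *+ 2) *+ 4 + M * (N x + N y).
apply: (@eq0_geometric _ _ _ K q) => // n.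
have -> : Dmix hyers_lim x y = Dmix (fun z => hyers_lim z - hyers_seq n z) x y +
    l ^+ n *: Dmix u (c ^+ n *: x) (c ^+ n *: y).
  rewrite -DmixZ -DmixD; congr Dmix; apply: funext => z.
  by rewrite subrK.
have tail_le z : `|hyers_lim z - hyers_seq n z| <= g z * q ^+ n.
  apply: le_trans (hyers_lim_tail z n) _.
  by rewrite /g le_eqVlt; apply/orP; left; apply/eqP; ring.
have Dmix_le : `|l ^+ n *: Dmix u (c ^+ n *: x) (c ^+ n *: y)| <= M * (N x + N y) * q ^+ n.
  rewrite normrZ normrX; apply: le_trans (ler_wpM2l (exprn_ge0 _ (normr_ge0 _)) (u_Dmix _ _)) _.
  by rewrite !(gauge_exprZ N_dil) /q exprMn le_eqVlt; apply/orP; left; apply/eqP; ring.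
apply: le_trans (ler_normD _ _) (le_trans (lerD (Dmix_norm_le x y tail_le) Dmix_le) _).
by rewrite /K le_eqVlt; apply/orP; left; apply/eqP; clearbody g; ring.
Qed.

End Hyers.

Section DoublingAsDilation.
Variables (R : numFieldType) (X Y : lmodType R) (k : nat).
Hypothesis k_gt0 : (0 < k)%N.
Implicit Type v : X -> Y.

Let k_neq0 : (k%:R : R) != 0. Proof. by rewrite pnatr_eq0 -lt0n. Qed.

Lemma double_halfZ (x : X) : (2^-1 *: x) *+ 2 = x.
Proof. by rewrite -scaler_nat scalerA mulfV ?scale1r ?pnatr_eq0. Qed.

Lemma halfZ_double (x : X) : 2^-1 *: (x *+ 2) = x.
Proof. by rewrite -[x *+ 2]scaler_nat scalerA mulVf ?scale1r ?pnatr_eq0. Qed.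

Lemma dilation_up_defect v x :
  k%:R^-1 *: v (2 *: x) - v x = k%:R^-1 *: (v (x *+ 2) - v x *+ k).
Proof. by rewrite scaler_nat scalerBr -[v x *+ k]scaler_nat scalerA mulVf // scale1r. Qed.

Lemma dilation_down_defect v x :
  k%:R *: v (2^-1 *: x) - v x = - (v ((2^-1 *: x) *+ 2) - v (2^-1 *: x) *+ k).
Proof. by rewrite double_halfZ scaler_nat opprB. Qed.

Lemma doubling_upP v : doubling k v <-> forall x, k%:R^-1 *: v (2 *: x) = v x.
Proof.
split=> v2 x; apply/eqP; rewrite -subr_eq0.
  by rewrite dilation_up_defect v2 subrr scaler0.
have /eqP : k%:R^-1 *: (v (x *+ 2) - v x *+ k) = 0.
  by rewrite -dilation_up_defect v2 subrr.
by rewrite scaler_eq0 invr_eq0 (negPf k_neq0).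
Qed.

Lemma doubling_downP v : doubling k v <-> forall x, k%:R *: v (2^-1 *: x) = v x.
Proof.
split=> v2 x; first by apply/eqP; rewrite -subr_eq0 dilation_down_defect v2 subrr oppr0.
by rewrite -[LHS]v2 halfZ_double scaler_nat.
Qed.

End DoublingAsDilation.

Lemma norm_powZ (R : numDomainType) (V : normedModType R) (c : R) (x : V) p :
  `|c *: x| ^+ p = `|c| ^+ p * `|x| ^+ p.
Proof. by rewrite normrZ exprMn. Qed.

Section DoublingEq0.
Variables (R : realType) (X Y : normedModType R) (k p : nat).
Hypothesis k_gt0 : (0 < k)%N.
Implicit Type v : X -> Y.

Let two_p_gt0 : (0 : R) < 2 ^+ p. Proof. by rewrite exprn_gt0. Qed.
Let k_pos : (0 : R) < k%:R. Proof. by rewrite ltr0n. Qed.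

Lemma doubling_eq0 v (K : R) : (2 : R) ^+ p != k%:R ->
  doubling k v -> (forall x, `|v x| <= K * `|x| ^+ p) -> forall x, v x = 0.
Proof.
move=> two_p_neq_k v2 v_le; case: (ltrgtP ((2 : R) ^+ p) k%:R) => [lt|gt|eq].
- apply: (@dilation_fixed_eq0 _ _ _ 2 k%:R^-1 (2 ^+ p) (fun x => `|x| ^+ p)) v_le.
  + by move=> x; rewrite norm_powZ ger0_norm.
  + exact: ltW.
  + by rewrite ger0_norm ?invr_ge0 ?ler0n // mulrC ltr_pdivrMr // mul1r.
  + exact/doubling_upP.
- apply: (@dilation_fixed_eq0 _ _ _ 2^-1 k%:R ((2 ^+ p)^-1) (fun x => `|x| ^+ p)) v_le.
  + by move=> x; rewrite norm_powZ ger0_norm ?invr_ge0 // exprVn.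
  + by rewrite invr_ge0 ltW.
  + by rewrite ger0_norm ?ler0n // ltr_pdivrMr // mul1r.
  + exact/doubling_downP.
- by rewrite eq eqxx in two_p_neq_k.
Qed.

End DoublingEq0.

Section HyersDoubling.
Variables (R : realType) (X : normedModType R) (Y : completeNormedModType R).
Variables (k p : nat).
Hypothesis k_gt0 : (0 < k)%N.
Implicit Types (u v : X -> Y) (c l e t : R).

Let two_p_gt0 : (0 : R) < 2 ^+ p. Proof. by rewrite exprn_gt0. Qed.
Let k_pos : (0 : R) < k%:R. Proof. by rewrite ltr0n. Qed.

Definition hyers_doubling_approx u U t :=
  [/\ forall x, `|U x - u x| <= t / `|2 ^+ p - k%:R| * `|x| ^+ p,
      doubling k U, odd_map u -> odd_map U &
      forall M, (forall x y, `|Dmix u x y| <= M * (`|x| ^+ p + `|y| ^+ p)) ->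
        forall x y, Dmix U x y = 0].

Lemma hyers_dilation_doubling u c l e t :
  `|l| * `|c| ^+ p < 1 -> 0 <= e ->
  (forall x, `|l *: u (c *: x) - u x| <= e * `|x| ^+ p) ->
  (forall v, (forall x, l *: v (c *: x) = v x) -> doubling k v) ->
  e / (1 - `|l| * `|c| ^+ p) = t / `|2 ^+ p - k%:R| ->
  exists U, hyers_doubling_approx u U t.
Proof.
move=> q_lt1 e_ge0 u_approx fix_doubling et.
pose N (x : X) := `|x| ^+ p.
have N_dil x : N (c *: x) = `|c| ^+ p * N x := norm_powZ c x p.
have N_ge0 x : 0 <= N x by rewrite exprn_ge0.
have rho_ge0 : 0 <= `|c| ^+ p by rewrite exprn_ge0.
exists (hyers_lim c l u); split.
- by move=> x; rewrite -et; exact: (hyers_lim_approx N_dil N_ge0 rho_ge0 q_lt1 e_ge0 u_approx).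
- exact/fix_doubling/(hyers_lim_dilation N_dil N_ge0 rho_ge0 q_lt1 e_ge0 u_approx).
- exact: (hyers_lim_odd N_dil N_ge0 rho_ge0 q_lt1 e_ge0 u_approx).
- exact: (hyers_lim_Dmix0 N_dil N_ge0 rho_ge0 q_lt1 e_ge0 u_approx).
Qed.

Lemma hyers_doubling u t : (2 : R) ^+ p != k%:R -> 0 <= t ->
  (forall x, `|u (x *+ 2) - u x *+ k| <= t * `|x| ^+ p) ->
  exists U, hyers_doubling_approx u U t.
Proof.
move=> two_p_neq_k t_ge0 u2; case: (ltrgtP ((2 : R) ^+ p) k%:R) => [lt|gt|eq].
- apply: (@hyers_dilation_doubling u 2 k%:R^-1 (t / k%:R)).
  + by rewrite ger0_norm ?invr_ge0 ?ler0n // ger0_norm // mulrC ltr_pdivrMr // mul1r.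
  + by rewrite divr_ge0 ?ler0n.
  + move=> x; rewrite dilation_up_defect // normrZ ger0_norm ?invr_ge0 ?ler0n //.
    by rewrite mulrC mulrAC ler_wpM2r ?invr_ge0 ?ler0n.
  + by move=> v /doubling_upP; apply.
  + rewrite ger0_norm ?invr_ge0 ?ler0n // ger0_norm // ltr0_norm ?subr_lt0 //.
    by field; rewrite !subr_eq0 (lt_eqF lt) (gt_eqF lt) (gt_eqF k_pos).
- apply: (@hyers_dilation_doubling u (2^-1) k%:R (t / 2 ^+ p)).
  + by rewrite ger0_norm ?ler0n // ger0_norm ?invr_ge0 // exprVn ltr_pdivrMr // mul1r.
  + by rewrite divr_ge0 // ltW.
  + move=> x; rewrite dilation_down_defect // normrN.
    apply: le_trans (u2 _) _; rewrite norm_powZ ger0_norm ?invr_ge0 // exprVn.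
    by rewrite mulrA.
  + by move=> v /doubling_downP; apply.
  + rewrite ger0_norm ?ler0n // ger0_norm ?invr_ge0 // exprVn gtr0_norm ?subr_gt0 //.
    by field; rewrite subr_eq0 (gt_eqF gt) (gt_eqF two_p_gt0).
- by rewrite eq eqxx in two_p_neq_k.
Qed.

End HyersDoubling.

Lemma two_expr_neq_natX (R : numDomainType) (p m : nat) :
  p <> m -> (2 : R) ^+ p != (2 ^ m)%:R.
Proof. by move=> pm; rewrite -natrX eqr_nat eqn_exp2l //; apply/eqP. Qed.

Section Uniqueness.
Variables (R : realType) (X Y : normedModType R) (p : nat).
Hypotheses (p_neq1 : p <> 1%N) (p_neq3 : p <> 3%N).

Let norm_double_pow (z : X) : `|z *+ 2| ^+ p = 2 ^+ p * `|z| ^+ p.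
Proof. by rewrite normrMn -[`|z| *+ 2]mulr_natr exprMn mulrC. Qed.

Lemma additive_cubic_eq0 (a c : X -> Y) (B : R) : additive_map a -> cubic_map c ->
  (forall z, `|a z + c z| <= B * `|z| ^+ p) -> (forall z, a z = 0) /\ (forall z, c z = 0).
Proof.
move=> a_add c_cub ac_le.
have a2 : doubling 2 a by move=> z; rewrite mulr2n a_add.
have c8 : doubling 8 c := cubic_map_double c_cub (@lmod_torsion_free R Y).
have ac_le2 z : `|a (z *+ 2) + c (z *+ 2)| <= B * 2 ^+ p * `|z| ^+ p.
  by rewrite -mulrA -norm_double_pow.
have ac_leMn z n : `|(a z + c z) *+ n| <= B * `|z| ^+ p *+ n.
  by rewrite normrMn lerMn2r ac_le orbT.
split.
- apply: (@doubling_eq0 R X Y 2 p isT a (B * (8 + 2 ^+ p) / 6) (two_expr_neq_natX _ p_neq1) a2).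
  move=> z; rewrite -(ler_pM2r (_ : (0 : R) < 6)) //.
  have -> : `|a z| * 6 = `|a z *+ 6| by rewrite normrMn mulr_natr.
  have -> : a z *+ 6 = (a z + c z) *+ 8 - (a (z *+ 2) + c (z *+ 2)).
    by rewrite a2 c8; zmod_ring.
  apply: le_trans (ler_normB _ _) (le_trans (lerD (ac_leMn _ _) (ac_le2 _)) _).
  by rewrite le_eqVlt; apply/orP; left; apply/eqP; field.
- apply: (@doubling_eq0 R X Y 8 p isT c (B * (2 + 2 ^+ p) / 6) (two_expr_neq_natX _ p_neq3) c8).
  move=> z; rewrite -(ler_pM2r (_ : (0 : R) < 6)) //.
  have -> : `|c z| * 6 = `|c z *+ 6| by rewrite normrMn mulr_natr.
  have -> : c z *+ 6 = (a (z *+ 2) + c (z *+ 2)) - (a z + c z) *+ 2.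
    by rewrite a2 c8; zmod_ring.
  apply: le_trans (ler_normB _ _) (le_trans (lerD (ac_le2 _) (ac_leMn _ _)) _).
  by rewrite le_eqVlt; apply/orP; left; apply/eqP; field.
Qed.

Lemma additive_cubic_unique (f A C A' C' : X -> Y) (B : R) :
  additive_map A -> cubic_map C -> additive_map A' -> cubic_map C' ->
  (forall x, `|f x - A x - C x| <= B * `|x| ^+ p) ->
  (forall x, `|f x - A' x - C' x| <= B * `|x| ^+ p) -> A' = A /\ C' = C.
Proof.
move=> A_add C_cub A'_add C'_cub fAC fAC'.
have [] := @additive_cubic_eq0 (fun z => A' z - A z) (fun z => C' z - C z) (B + B)
  (additive_mapB A'_add A_add) (cubic_mapB C'_cub C_cub).
  move=> z; rewrite mulrDl; apply: le_trans (lerD (fAC z) (fAC' z)).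
  have -> : A' z - A z + (C' z - C z) = (f z - A z - C z) - (f z - A' z - C' z).
    by zmod_ring.
  exact: ler_normB.
by move=> AA' CC'; split; apply: funext => z; apply/eqP; rewrite -subr_eq0; apply/eqP.
Qed.

End Uniqueness.

Section MixedStability.
Variables (R : realType) (X : normedModType R) (Y : completeNormedModType R).
Variables (p : nat) (t : R) (f : X -> Y).
Hypotheses (t_ge0 : 0 <= t) (f_odd : odd_map f).
Hypothesis f_Dmix : forall x y, `|Dmix f x y| <= t * (`|x| ^+ p + `|y| ^+ p).

Lemma Dmix_double_subMn_le m x y :
  `|Dmix (fun z => f (z *+ 2) - f z *+ m) x y| <= t * (2 ^+ p + m%:R) * (`|x| ^+ p + `|y| ^+ p).
Proof.
rewrite DmixBMn Dmix_double; apply: le_trans (ler_normB _ _) _.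
have Dm : `|Dmix f x y| *+ m <= (t * (`|x| ^+ p + `|y| ^+ p)) *+ m.
  by rewrite lerMn2r f_Dmix orbT.
rewrite normrMn; apply: le_trans (lerD (f_Dmix _ _) Dm) _.
rewrite !normrMn -![`|_| *+ 2]mulr_natr !exprMn le_eqVlt; apply/orP; left; apply/eqP.
by rewrite -mulr_natr; ring.
Qed.

Lemma doubling_part k m : (k + m = 10)%N -> (k * m = 16)%N -> (2 : R) ^+ p != k%:R ->
  exists U : X -> Y, [/\ doubling k U, odd_map U, forall x y, Dmix U x y = 0 &
    forall x, `|U x - (f (x *+ 2) - f x *+ m)| <= t / `|2 ^+ p - k%:R| * `|x| ^+ p].
Proof.
move=> kpm km two_p_neq_k.
pose u z := f (z *+ 2) - f z *+ m.
have k_gt0 : (0 < k)%N by case: k km {kpm two_p_neq_k}.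
have u2 x : `|u (x *+ 2) - u x *+ k| <= t * `|x| ^+ p.
  have := f_Dmix x x; rewrite Dmix_diag ?odd_map0 ?normrMn //; last exact: lmod_torsion_free.
  have -> : u (x *+ 2) - u x *+ k = f (x *+ 4) - f (x *+ 2) *+ 10 + f x *+ 16.
    by rewrite /u -mulrnA -km -kpm; zmod_ring.
  by rewrite -mulr2n mulrnAr lerMn2r.
have u_odd : odd_map u by move=> x; rewrite /u mulNrn !f_odd mulNrn; zmod_ring.
have [U [U_approx U2 U_odd U_Dmix]] := hyers_doubling k_gt0 two_p_neq_k t_ge0 u2.
exists U; split => //; first exact: U_odd.
by apply: (U_Dmix (t * (2 ^+ p + m%:R))) => x y; exact: Dmix_double_subMn_le.
Qed.

Lemma additive_cubic_approx : p <> 1%N -> p <> 3%N ->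
  exists A : X -> Y, exists C : X -> Y, [/\ additive_map A, cubic_map C &
    forall x, `|f x - A x - C x| <=
      t / 6 * ((`|2 ^+ p - 2| : R)^-1 + (`|2 ^+ p - 8| : R)^-1) * `|x| ^+ p].
Proof.
move=> p_neq1 p_neq3; have tfY := @lmod_torsion_free R Y.
have [Ug [Ug8 Ug_odd Ug_Dmix Ug_approx]] :=
  doubling_part (k := 8) (m := 2) erefl erefl (two_expr_neq_natX _ p_neq3).
have [Uh [Uh2 Uh_odd Uh_Dmix Uh_approx]] :=
  doubling_part (k := 2) (m := 8) erefl erefl (two_expr_neq_natX _ p_neq1).
exists (fun z => - ((6 : R)^-1 *: Uh z)), (fun z => (6 : R)^-1 *: Ug z); split.
- by move=> x y; rewrite (additive_of_Dmix0 tfY Uh_odd Uh_Dmix Uh2) scalerDr opprD.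
- exact/cubic_mapZ/(cubic_of_Dmix0 tfY Ug_odd Ug_Dmix Ug8).
move=> x; have -> : f x - - ((6 : R)^-1 *: Uh x) - (6 : R)^-1 *: Ug x =
    (6 : R)^-1 *: ((Uh x - (f (x *+ 2) - f x *+ 8)) - (Ug x - (f (x *+ 2) - f x *+ 2))).
  have six : ((6 : R)^-1 *: f x) *+ 6 = f x.
    by rewrite -scaler_nat scalerA mulfV ?scale1r ?pnatr_eq0.
  by rewrite -{1}six !(scalerBr, scalerDr, scalerMnr); zmod_ring.
rewrite normrZ ger0_norm ?invr_ge0 ?ler0n //.
apply: le_trans (ler_wpM2l _ (ler_normB _ _)) _; first by rewrite invr_ge0 ler0n.
apply: le_trans (ler_wpM2l _ (lerD (Uh_approx x) (Ug_approx x))) _.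
  by rewrite invr_ge0 ler0n.
by rewrite le_eqVlt; apply/orP; left; apply/eqP; ring.
Qed.

End MixedStability.

Theorem corollary3p4 (R : realType) (X : normedModType R)
  (Y : completeNormedModType R) (p theta : nat)
  (hp1 : p <> 1%N) (hp3 : p <> 3%N) (f : X -> Y)
  (hodd : odd_map f)
  (hD : forall x y : X,
      `|Dmix f x y| <= theta%:R * (`|x| ^+ p + `|y| ^+ p)) :
  exists A : X -> Y, exists C : X -> Y,
    [/\ additive_map A, cubic_map C,
      (forall x : X,
        `|f x - A x - C x| <=
          theta%:R / 6 * ((`|2 ^+ p - 2| : R)^-1 + (`|2 ^+ p - 8| : R)^-1)
            * `|x| ^+ p)
    & forall A' C' : X -> Y, additive_map A' -> cubic_map C' ->
        (forall x : X,
          `|f x - A' x - C' x| <=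
            theta%:R / 6 * ((`|2 ^+ p - 2| : R)^-1 + (`|2 ^+ p - 8| : R)^-1)
              * `|x| ^+ p) ->
        A' = A /\ C' = C].
Proof.
have theta_ge0 : 0 <= theta%:R :> R by rewrite ler0n.
have [A [C [A_add C_cub fAC]]] := additive_cubic_approx theta_ge0 hodd hD hp1 hp3.
exists A, C; split => // A' C' A'_add C'_cub fAC'.
exact: (additive_cubic_unique hp1 hp3 A_add C_cub A'_add C'_cub fAC fAC').
Qed.
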